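(* Let $p$ be an odd prime and $m,r$ positive integers. Then $S_{mp^r+1}\equiv 4(mp^r+1)S_{mp^{r-1}}\pmod{p^{2r}}$.
   Context: $(S_n)_{n\ge0}$ is the integer sequence defined by $S_0=1$, $S_1=4$ and $(n+1)^2S_{n+1}=4(3n^2+3n+1)S_n-32n^2S_{n-1}$ for $n\ge1$; equivalently $S_n=\sum_{k=0}^n\binom nk\binom{2k}k\binom{2n-2k}{n-k}$. *)

From mathcomp Require Import all_boot.
Set Implicit Arguments. Unset Strict Implicit. Unset Printing Implicit Defensive.

Definition S (n : nat) : nat :=
  \sum_(0 <= k < n.+1) 'C(n, k) * 'C(k.*2, k) * 'C((n - k).*2, n - k).

From mathcomp Require Import all_boot all_algebra.
From mathcomp Require Import ring zify.
Set Implicit Arguments. Unset Strict Implicit. Unset Printing Implicit Defensive.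
Import GRing.Theory.

(* Let p ^ R %| N and let sterm n k be the k-th summand of S n.  Splitting k = p i + j
   with j < p, the recurrences of sterm in n relate sterm (p N + 1) (p i) and
   sterm (p N + 1) (p i + 1) to 2 (p N + 1) sterm (p N) (p i), while for 1 < j < p the
   term is divisible by p ^ (2 R + 2) by Legendre's formula.  It remains to see that
   sterm (p N) (p i) = sterm N i mod p ^ (2 R + 2).  Removing the multiples of p from
   (p n)! leaves a p-free factorial F n, and F (a + b) = F a * F b mod p ^ (2 t + 2)
   when p ^ t divides a and b: the polynomial prod (z + k) over the k <= p b prime to p
   is invariant under z |-> - p b - z, so its linear coefficient is divisible by p b.
   When t < R the missing precision is supplied by the p-adic valuation of
   sterm N i, again by Legendre's formula. *)

Definition pfree_fact (p x : nat) : nat :=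
  \prod_(i < x) \prod_(j < p.-1) (p * i + j.+1).

Lemma factD n m : (n + m)`! = n`! * \prod_(j < m) (n + j.+1).
Proof.
elim: m => [|m IH]; first by rewrite addn0 big_ord0 muln1.
by rewrite addnS factS IH big_ord_recr /= -addnS; ring.
Qed.

Lemma fact_pmul p x : 0 < p -> (p * x)`! = p ^ x * x`! * pfree_fact p x.
Proof.
move=> p_gt0; elim: x => [|x IH]; first by rewrite muln0 /pfree_fact big_ord0.
rewrite mulnS addnC factD IH /pfree_fact big_ord_recr /=.
have -> : \prod_(j < p) (p * x + j.+1) = \prod_(j < p.-1.+1) (p * x + j.+1).
  by rewrite prednK.
by rewrite big_ord_recr /= prednK // addnC -mulnS factS expnS; ring.
Qed.

Lemma coprime_pfree_fact p x : prime p -> coprime p (pfree_fact p x).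
Proof.
move=> p_pr; have coprimeM u v : coprime p u -> coprime p v -> coprime p (u * v).
  by rewrite coprimeMr => -> ->.
apply: (big_ind (coprime p)) => [||i _]; [exact: coprimen1 | exact: coprimeM |].
apply: (big_ind (coprime p)) => [||j _]; [exact: coprimen1 | exact: coprimeM |].
rewrite prime_coprime // dvdn_addr ?dvdn_mulr // gtnNdvd //.
by have := ltn_ord j; have := prime_gt0 p_pr; lia.
Qed.

Lemma bin_pmul p a b : 0 < p ->
  'C(p * (a + b), p * a) * pfree_fact p a * pfree_fact p b =
  'C(a + b, a) * pfree_fact p (a + b).
Proof.
move=> p_gt0; have := bin_fact (leq_addr b a); rewrite addKn => binab.
have := bin_fact (leq_mul (leqnn p) (leq_addr b a)); rewrite -mulnBr addKn.
rewrite !fact_pmul // -binab expnD => binpab.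
apply/eqP; rewrite -(@eqn_pmul2l (p ^ a * p ^ b * (a`! * b`!))); last first.
  by rewrite !muln_gt0 !expn_gt0 p_gt0 !fact_gt0.
apply/eqP; transitivity ('C(p * (a + b), p * a) *
  (p ^ a * a`! * pfree_fact p a * (p ^ b * b`! * pfree_fact p b))); first ring.
by rewrite binpab; ring.
Qed.

Definition sterm (n k : nat) : nat := 'C(n, k) * 'C(k.*2, k) * 'C((n - k).*2, n - k).

Lemma S_widen n M : n < M -> S n = \sum_(0 <= k < M) sterm n k.
Proof.
move=> lt_nM; rewrite /S [RHS](big_cat_nat _ (n := n.+1)) //=.
rewrite [X in _ = _ + X]big_nat_cond [X in _ = _ + X]big1 ?addn0 //.
by move=> k /andP[/andP[lt_nk _] _]; rewrite /sterm bin_small // !mul0n.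
Qed.

Lemma mul_binS_central m : m.+1 * 'C(m.+1.*2, m.+1) = 2 * m.*2.+1 * 'C(m.*2, m).
Proof.
have := mul_bin_diag m.+1.*2 m; rewrite doubleS /= => <-.
have := mul_bin_down m.*2.+1 m; rewrite /= -addnn -addSn addnK addnn => diag.
apply/eqP; rewrite -(@eqn_pmul2l m.+1) //; apply/eqP.
by rewrite mulnCA -diag -!mul2n; ring.
Qed.

Lemma sterm_Sn n k : k <= n ->
  sterm n.+1 k * (n.+1 - k) ^ 2 = sterm n k * n.+1 * (2 * (n - k).*2.+1).
Proof.
move=> le_kn; rewrite /sterm subSn //.
have := mul_bin_down n.+1 k; rewrite /= subSn // => down.
have := mul_binS_central (n - k) => central.
rewrite -mulnn.
transitivity ((n - k).+1 * 'C(n.+1, k) * 'C(k.*2, k) *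
  ((n - k).+1 * 'C((n - k).+1.*2, (n - k).+1))); first ring.
by rewrite -down central; ring.
Qed.

Lemma sterm_SS n k : k <= n ->
  sterm n.+1 k.+1 * k.+1 ^ 2 = sterm n k * n.+1 * (2 * k.*2.+1).
Proof.
move=> le_kn; rewrite /sterm subSS -mulnn.
transitivity (k.+1 * 'C(n.+1, k.+1) * (k.+1 * 'C(k.+1.*2, k.+1)) *
  'C((n - k).*2, n - k)); first ring.
by rewrite -(mul_bin_diag n.+1 k) mul_binS_central; ring.
Qed.

Lemma sterm_pmul p N a : 0 < p -> a <= N ->
  sterm (p * N) (p * a) * (pfree_fact p a ^ 3 * pfree_fact p (N - a) ^ 3) =
  sterm N a * (pfree_fact p N * pfree_fact p (a + a) *
               pfree_fact p ((N - a) + (N - a))).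
Proof.
move=> p_gt0 le_aN; rewrite /sterm -mulnBr -!addnn -!mulnDr.
set b := N - a; have binab := bin_pmul a b p_gt0.
rewrite [a + b]subnKC // in binab.
have binaa := bin_pmul a a p_gt0; have binbb := bin_pmul b b p_gt0.
transitivity ('C(p * N, p * a) * pfree_fact p a * pfree_fact p b *
  ('C(p * (a + a), p * a) * pfree_fact p a * pfree_fact p a) *
  ('C(p * (b + b), p * b) * pfree_fact p b * pfree_fact p b)); first ring.
by rewrite binab binaa binbb; ring.
Qed.

Lemma logn_fact_widen p n M : prime p -> n < M ->
  logn p n`! = \sum_(1 <= k < M) n %/ p ^ k.
Proof.
move=> p_pr lt_nM; rewrite logn_fact // [RHS](big_cat_nat _ (n := n.+1)) //=.
rewrite [X in _ = _ + X]big_nat_cond [X in _ = _ + X]big1 ?addn0 //.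
move=> k /andP[/andP[lt_nk _] _]; rewrite divn_small //.
by rewrite (leq_trans lt_nk) // ltnW // ltn_expl // prime_gt1.
Qed.

Lemma divn_double a q : 0 < q -> a.*2 %/ q = (a %/ q).*2 + (a %% q).*2 %/ q.
Proof. by move=> q_gt0; rewrite {1}(divn_eq a q) doubleD doubleMl divnMDl. Qed.

(* (a %% p ^ k).*2 %/ p ^ k is the carry out of the k lowest base-p digits in a + a
   (Kummer). *)
Lemma logn_bin_central p a M : prime p -> a.*2 < M ->
  logn p 'C(a.*2, a) = \sum_(1 <= k < M) (a %% p ^ k).*2 %/ p ^ k.
Proof.
move=> p_pr lt_aM; have le_a2a : a <= a.*2 by rewrite -addnn leq_addr.
have := congr1 (logn p) (bin_fact le_a2a); rewrite -{2}addnn addKn.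
rewrite !lognM ?muln_gt0 ?bin_gt0 ?fact_gt0 //.
rewrite !(@logn_fact_widen p _ M) //; last exact: leq_ltn_trans lt_aM.
have -> : \sum_(1 <= k < M) a.*2 %/ p ^ k =
    (\sum_(1 <= k < M) a %/ p ^ k).*2 + \sum_(1 <= k < M) (a %% p ^ k).*2 %/ p ^ k.
  rewrite -[(\sum_(1 <= k < M) _).*2]mul2n big_distrr -big_split /=.
  by apply: eq_bigr => k _; rewrite mul2n divn_double // expn_gt0 prime_gt0.
lia.
Qed.

Lemma carry_sum_gt0 q a b : 0 < q -> q %| a + b -> ~~ (q %| a) ->
  0 < (a %% q).*2 %/ q + (b %% q).*2 %/ q.
Proof.
move=> q_gt0 dvd_ab ndvd_a.
have a_gt0 : 0 < a %% q by rewrite lt0n.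
have lt_aq := ltn_pmod a q_gt0; have lt_bq := ltn_pmod b q_gt0.
have : q %| a %% q + b %% q by rewrite /dvdn modnDm.
case/dvdnP => [[|[|c]] sum_ab]; try lia.
by rewrite addn_gt0 !divn_gt0 //; lia.
Qed.

Lemma leq_logn_bin_central p a b K t : prime p -> p ^ K %| a + b ->
  ~~ (p ^ t.+1 %| a) -> K - t <= logn p ('C(a.*2, a) * 'C(b.*2, b)).
Proof.
move=> p_pr dvd_ab ndvd_a.
have [le_Kt|lt_tK] := leqP K t; first by move: le_Kt; rewrite -subn_eq0 => /eqP->.
have le_double c : c <= c.*2 by rewrite -addnn leq_addr.
set M := (a.*2 + b.*2 + K).+1.
rewrite lognM ?bin_gt0 // (@logn_bin_central p a M) ?(@logn_bin_central p b M);
  try lia.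
rewrite -big_split /= (big_cat_nat _ (m := 1) (n := t.+1) (p := M)) //=; try lia.
rewrite (big_cat_nat _ (m := t.+1) (n := K.+1) (p := M)) //=; try lia.
rewrite addnCA (leq_trans _ (leq_addr _ _)) // -(subSS t K) -[_ - _]muln1.
rewrite -sum_nat_const_nat big_nat_cond [X in _ <= X]big_nat_cond.
apply: leq_sum => k /andP[/andP[lt_tk le_kK] _].
apply: carry_sum_gt0; first by rewrite expn_gt0 prime_gt0.
  by apply: dvdn_trans dvd_ab; rewrite dvdn_exp2l.
by apply: contra ndvd_a; apply: dvdn_trans; rewrite dvdn_exp2l.
Qed.

Lemma dvdn_bin p n a K t : prime p -> p ^ K %| n -> ~~ (p ^ t.+1 %| a) ->
  p ^ (K - t) %| 'C(n, a).
Proof.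
move=> p_pr dvd_n ndvd_a; case: a ndvd_a => [|a]; first by rewrite dvdn0.
have [->|bin_gt0] := posnP 'C(n, a.+1); first by rewrite dvdn0.
have : p ^ K %| a.+1 * 'C(n, a.+1) by rewrite -mul_bin_diag dvdn_mulr.
by rewrite !pfactor_dvdn ?muln_gt0 ?bin_gt0 // lognM //; lia.
Qed.

Lemma dvdn_sterm p n a K t : prime p -> p ^ K %| n -> ~~ (p ^ t.+1 %| a) ->
  a <= n -> p ^ (2 * (K - t)) %| sterm n a.
Proof.
move=> p_pr dvd_n ndvd_a le_an.
rewrite /sterm -mulnA mul2n -addnn expnD dvdn_mul ?(dvdn_bin p_pr dvd_n ndvd_a) //.
have le_double c : c <= c.*2 by rewrite -addnn leq_addr.
rewrite pfactor_dvdn ?muln_gt0 ?bin_gt0 ?le_double //.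
by apply: leq_logn_bin_central; rewrite ?subnKC.
Qed.

Lemma eqn_mod_dvdz d m n : (m == n %[mod d]) = (d%:Z %| (m%:Z - n%:Z)%R)%Z.
Proof. by rewrite -eqz_mod_dvd !modz_nat eqz_nat. Qed.

Lemma eqn_modM d m1 m2 n1 n2 : m1 = n1 %[mod d] -> m2 = n2 %[mod d] ->
  m1 * m2 = n1 * n2 %[mod d].
Proof. by move=> congr1 congr2; rewrite -modnMm congr1 congr2 modnMm. Qed.

Lemma eqn_modMr c d m n : coprime c d ->
  (m * c == n * c %[mod d]) = (m == n %[mod d]).
Proof.
move=> co_cd; rewrite !eqn_mod_dvdz !PoszM -mulrBl !dvdzE abszM /=.
by rewrite Gauss_dvdl // coprime_sym.
Qed.

Lemma eqn_mod_dvdMl k d e m n : d %| k -> m = n %[mod e] ->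
  k * m = k * n %[mod d * e].
Proof.
move=> dvd_k /eqP; rewrite !eqn_mod_dvdz => dvd_mn; apply/eqP.
by rewrite !eqn_mod_dvdz !PoszM -mulrBr dvdz_mul // dvdzE.
Qed.

(* 2 n Y (c + 1)^2 = X (c + 1)^2 + 2 n Y c^2, since (c + 1)^2 = (2 c + 1) + c^2. *)
Lemma eqn_mod_sqrS d c n X Y : coprime c.+1 d -> d %| Y * c ^ 2 ->
  X * c.+1 ^ 2 = Y * n * (2 * c.*2.+1) -> X = 2 * n * Y %[mod d].
Proof.
move=> co_cd dvd_Yc rec; apply/eqP; rewrite -(eqn_modMr _ _ (coprimeXl 2 co_cd)).
have -> : 2 * n * Y * c.+1 ^ 2 = X * c.+1 ^ 2 + 2 * n * (Y * c ^ 2).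
  by rewrite rec -mul2n; ring.
by rewrite -modnDmr (eqP (dvdn_mull _ dvd_Yc)) addn0.
Qed.

Lemma coprimeS_pexp p c k : prime p -> p %| c -> coprime c.+1 (p ^ k).
Proof.
move=> p_pr dvd_c; rewrite coprimeXr // coprime_sym prime_coprime //.
by rewrite -addn1 dvdn_addr // dvdn1 gtn_eqF // prime_gt1.
Qed.

Section PfreeFactCongruence.
Local Open Scope ring_scope.

Lemma horner_taylor1 (R : comNzSemiRingType) (P : {poly R}) x :
  P.[x] = P`_0 + P`_1 * x + (drop_poly 2 P).[x] * x ^+ 2.
Proof.
rewrite -{1}(poly_take_drop 2 P) hornerD hornerM hornerXn /take_poly horner_poly.
by rewrite !big_ord_recl big_ord0 expr0 expr1 mulr1 addr0.
Qed.

Lemma dvdz_hornerB_sym (P : {poly int}) u v d : u != 0 -> P.[- u] = P.[0] ->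
  (d %| u)%Z -> (d %| v)%Z -> (d ^+ 2 %| P.[v] - P.[0])%Z.
Proof.
move=> u_neq0 sym du dv; set Q := drop_poly 2 P.
have coef1 : P`_1 = u * Q.[- u].
  apply: (mulfI u_neq0); apply/eqP; rewrite -subr_eq0; apply/eqP.
  transitivity (P.[0] - P.[- u]); last by rewrite sym subrr.
  by rewrite (horner_taylor1 P 0) (horner_taylor1 P (- u)) expr0n /=; ring.
have -> : P.[v] - P.[0] = u * v * Q.[- u] + v ^+ 2 * Q.[v].
  by rewrite (horner_taylor1 P v) (horner_taylor1 P 0) coef1 expr0n /=; ring.
by rewrite rpredD // dvdz_mulr // ?dvdz_exp2r // expr2 dvdz_mul.
Qed.

Definition pfree_fact_poly (p b : nat) : {poly int} :=
  \prod_(i < b) \prod_(j < p.-1) ('X + (p * i + j.+1)%:R%:P).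

Lemma horner_pfree_fact_poly p b x : (pfree_fact_poly p b).[x] =
  \prod_(i < b) \prod_(j < p.-1) (x + (p * i + j.+1)%:R).
Proof.
rewrite horner_prod; apply: eq_bigr => i _.
by rewrite horner_prod; apply: eq_bigr => j _; rewrite hornerD hornerX hornerC.
Qed.

Lemma pfree_fact_poly_sym p b : odd p ->
  (pfree_fact_poly p b).[- (p * b)%:R] = (pfree_fact_poly p b).[0].
Proof.
move=> p_odd; have p_gt0 : (0 < p)%N by case: (p) p_odd.
rewrite !horner_pfree_fact_poly [LHS](reindex_inj rev_ord_inj) /=.
apply: eq_bigr => i _; rewrite [LHS](reindex_inj rev_ord_inj) /=.
have -> : \prod_(j < p.-1) (- (p * b)%:R + (p * (b - i.+1) + (p.-1 - j.+1).+1)%:R)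
    = \prod_(j < p.-1) (-1 * (0 + (p * i + j.+1)%:R)) :> int.
  apply: eq_bigr => j _; have lt_ib := ltn_ord i; have lt_jp := ltn_ord j.
  have sum_pb : (p * (b - i.+1) + (p.-1 - j.+1).+1 + (p * i + j.+1) = p * b)%N.
    rewrite -[in RHS](subnK lt_ib) mulnDr mulnS; lia.
  by rewrite -sum_pb !natrD; ring.
rewrite big_split /= prodr_const card_ord -signr_odd.
by rewrite -(prednK p_gt0) /= in p_odd; rewrite (negPf p_odd) expr0 mul1r.
Qed.

Lemma pfree_factD p a b t : odd p -> (p ^ t %| a)%N -> (p ^ t %| b)%N ->
  (pfree_fact p (a + b) = pfree_fact p a * pfree_fact p b %[mod p ^ (2 * t.+1)])%N.
Proof.
move=> p_odd dvd_a dvd_b; have p_gt0 : (0 < p)%N by case: (p) p_odd.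
have [->|b_gt0] := posnP b; first by rewrite addn0 /pfree_fact big_ord0 muln1.
set P := pfree_fact_poly p b.
have fact_b : (pfree_fact p b)%:R = P.[0] :> int.
  rewrite horner_pfree_fact_poly natr_prod; apply: eq_bigr => i _.
  by rewrite natr_prod; apply: eq_bigr => j _; rewrite add0r.
have fact_ab : (pfree_fact p (a + b))%:R = (pfree_fact p a)%:R * P.[(p * a)%:R] :> int.
  have -> : pfree_fact p (a + b) = (pfree_fact p a *
      \prod_(i < b) \prod_(j < p.-1) (p * (a + i) + j.+1))%N.
    by rewrite /pfree_fact big_split_ord.
  rewrite natrM horner_pfree_fact_poly; congr (_ * _).
  rewrite natr_prod; apply: eq_bigr => i _; rewrite natr_prod; apply: eq_bigr => j _.
  by rewrite -natrD mulnDr addnA.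
apply/eqP; rewrite eqn_mod_dvdz -!natz natrM fact_ab fact_b -mulrBr.
rewrite dvdz_mull // [(2 * _)%N]mulnC expnM natrX.
apply: (@dvdz_hornerB_sym _ (p * b)%:R).
- by rewrite natz eqz_nat muln_eq0 negb_or -!lt0n p_gt0.
- exact: pfree_fact_poly_sym.
- by rewrite !natz dvdzE /= expnS dvdn_pmul2l.
- by rewrite !natz dvdzE /= expnS dvdn_pmul2l.
Qed.

End PfreeFactCongruence.

Lemma sterm_dvdn_split p R N i : prime p -> p ^ R %| N -> i <= N ->
  exists2 t, t <= R /\ p ^ t %| i &
    p ^ (2 * (R - t)) %| sterm N i /\ p ^ (2 * (R - t)) %| sterm (p * N) (p * i).
Proof.
move=> p_pr dvd_N le_iN; have p_gt0 := prime_gt0 p_pr.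
have [dvd_i|ndvd_i] := boolP (p ^ R %| i).
  by exists R; rewrite ?subnn ?muln0 ?dvd1n.
have i_gt0 : 0 < i by case: (i) ndvd_i; rewrite ?dvdn0.
have dvd_i := pfactor_dvdnn p i; set t := logn p i in dvd_i *.
have ndvd_iS : ~~ (p ^ t.+1 %| i) by rewrite pfactor_dvdn // ltnn.
have lt_tR : t < R.
  by rewrite ltnNge; apply: contra ndvd_i => /dvdn_exp2l/dvdn_trans; apply.
exists t; split; [exact: ltnW | by [] | exact: dvdn_sterm ndvd_iS le_iN |].
rewrite -(subSS t R); apply: dvdn_sterm; rewrite ?leq_mul2l ?le_iN ?orbT //.
  by rewrite expnS dvdn_pmul2l.
by rewrite expnS dvdn_pmul2l.
Qed.

Lemma sterm_pmul_congr p R N i t : prime p -> odd p -> p ^ R %| N -> i <= N ->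
  t <= R -> p ^ t %| i -> p ^ (2 * (R - t)) %| sterm N i ->
  sterm (p * N) (p * i) = sterm N i %[mod p ^ (2 * R.+1)].
Proof.
move=> p_pr p_odd dvd_N le_iN le_tR dvd_i dvd_sterm.
have dvd_tN : p ^ t %| N by apply: dvdn_trans dvd_N; rewrite dvdn_exp2l.
set b := N - i; have dvd_b : p ^ t %| b by rewrite dvdn_sub.
have co_F : coprime (pfree_fact p i ^ 3 * pfree_fact p b ^ 3) (p ^ (2 * R.+1)).
  by rewrite coprimeMl !coprimeXl ?coprimeXr // coprime_sym coprime_pfree_fact.
apply/eqP; rewrite -(eqn_modMr _ _ co_F) (sterm_pmul (prime_gt0 p_pr) le_iN).
have -> : 2 * R.+1 = 2 * (R - t) + 2 * t.+1 by rewrite -mulnDr addnS subnK.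
rewrite expnD; apply/eqP/eqn_mod_dvdMl => //; set q := p ^ (2 * t.+1).
have congr_N := pfree_factD p_odd dvd_i dvd_b; rewrite subnKC // in congr_N.
have congr_i := pfree_factD p_odd dvd_i dvd_i.
have congr_b := pfree_factD p_odd dvd_b dvd_b.
have congr_prod : pfree_fact p N * pfree_fact p (i + i) * pfree_fact p (b + b) =
    pfree_fact p i * pfree_fact p b * (pfree_fact p i * pfree_fact p i) *
    (pfree_fact p b * pfree_fact p b) %[mod q].
  by apply: eqn_modM => //; apply: eqn_modM.
by rewrite congr_prod; congr (_ %% _); ring.
Qed.

Lemma eqn_mod_stermS p R N i c X : prime p -> odd p -> p ^ R %| N -> i <= N ->
  (forall t, t <= R -> p ^ t %| i -> p ^ t.+1 %| c) ->
  X * c.+1 ^ 2 = sterm (p * N) (p * i) * (p * N).+1 * (2 * c.*2.+1) ->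
  X = 2 * (p * N).+1 * sterm N i %[mod p ^ (2 * R.+1)].
Proof.
move=> p_pr p_odd dvd_N le_iN dvd_c rec.
have [t [le_tR dvd_i] [dvd_sterm dvd_stermp]] := sterm_dvdn_split p_pr dvd_N le_iN.
have dvd_tc := dvd_c t le_tR dvd_i.
rewrite -modnMmr -(sterm_pmul_congr p_pr p_odd dvd_N le_iN le_tR dvd_i dvd_sterm).
rewrite modnMmr; apply: (eqn_mod_sqrS _ _ rec).
  by apply: coprimeS_pexp p_pr (dvdn_trans _ dvd_tc); rewrite expnS dvdn_mulr.
have -> : 2 * R.+1 = 2 * (R - t) + t.+1 * 2.
  by rewrite [t.+1 * 2]mulnC -mulnDr addnS subnK.
by rewrite expnD [p ^ (t.+1 * 2)]expnM dvdn_mul // dvdn_exp2r.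
Qed.

Lemma sterm_Sn_pmul_congr p R N i : prime p -> odd p -> p ^ R %| N -> i <= N ->
  sterm (p * N).+1 (p * i) = 2 * (p * N).+1 * sterm N i %[mod p ^ (2 * R.+1)].
Proof.
move=> p_pr p_odd dvd_N le_iN; apply: (eqn_mod_stermS (c := p * (N - i))) => //.
  move=> t le_tR dvd_i; rewrite expnS dvdn_pmul2l ?(prime_gt0 p_pr) // dvdn_sub //.
  by apply: dvdn_trans dvd_N; rewrite dvdn_exp2l.
by rewrite mulnBr -subSn ?sterm_Sn // leq_mul2l le_iN orbT.
Qed.

Lemma sterm_SS_pmul_congr p R N i : prime p -> odd p -> p ^ R %| N -> i <= N ->
  sterm (p * N).+1 (p * i).+1 = 2 * (p * N).+1 * sterm N i %[mod p ^ (2 * R.+1)].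
Proof.
move=> p_pr p_odd dvd_N le_iN; apply: (eqn_mod_stermS (c := p * i)) => //.
  by move=> t _ dvd_i; rewrite expnS dvdn_pmul2l // prime_gt0.
by rewrite sterm_SS // leq_mul2l le_iN orbT.
Qed.

Lemma sterm_pmulD_dvdn p R N i j : prime p -> p ^ R %| N -> 1 < j < p ->
  p ^ (2 * R.+1) %| sterm (p * N).+1 (p * i + j).
Proof.
move=> p_pr dvd_N /andP[lt_1j lt_jp].
have ndvd q : 0 < q < p -> ~~ (p %| p * i + q).
  by case/andP=> q_gt0 lt_qp; rewrite dvdn_addr ?dvdn_mulr // gtnNdvd.
have ndvd_pred : ~~ (p %| p * i + j.-1) by apply: ndvd; lia.
case: (ltnP (p * N).+1 (p * i + j)) => [lt_Nk|le_kSN].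
  by rewrite /sterm bin_small // !mul0n dvdn0.
have le_kN : p * i + j <= p * N.
  rewrite -ltnS ltn_neqAle le_kSN andbT; apply/eqP => eq_k; case/negP: ndvd_pred.
  by rewrite (_ : _ + _ = p * N) ?dvdn_mulr //; lia.
have dvd_sterm : p ^ (2 * R.+1) %| sterm (p * N) (p * i + j).
  rewrite -[R.+1]subn0; apply: dvdn_sterm le_kN => //.
    by rewrite expnS dvdn_pmul2l // prime_gt0.
  by rewrite expn1 ndvd //; lia.
have co_d : coprime (p ^ (2 * R.+1)) (((p * N).+1 - (p * i + j)) ^ 2).
  rewrite coprimeXl // coprimeXr // prime_coprime //; apply/negP => dvd_d.
  case/negP: ndvd_pred; rewrite -(dvdn_addl _ dvd_d) (_ : _ + _ = p * N) ?dvdn_mulr //.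
  by lia.
by rewrite -(Gauss_dvdl _ co_d) sterm_Sn // dvdn_mulr // dvdn_mulr.
Qed.

Lemma sum_nat_blocks p N (F : nat -> nat) :
  \sum_(0 <= k < p * N) F k = \sum_(0 <= i < N) \sum_(0 <= j < p) F (p * i + j).
Proof.
elim: N => [|N IH]; first by rewrite muln0 !big_geq.
rewrite big_nat_recr //= -IH mulnS addnC (big_cat_nat _ (n := p * N)) ?leq_addr //=.
congr (_ + _); rewrite -{1}[p * N]add0n big_addn addKn.
by apply: eq_bigr => j _; rewrite addnC.
Qed.

Lemma S_pmulS_congr p R N : prime p -> odd p -> p ^ R %| N ->
  S (p * N).+1 = 4 * (p * N).+1 * S N %[mod p ^ (2 * R.+1)].
Proof.
move=> p_pr p_odd dvd_N; have p_gt1 := prime_gt1 p_pr.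
rewrite (@S_widen _ (p * N.+1)); last by rewrite mulnS; lia.
rewrite sum_nat_blocks /S big_distrr /= -modn_summ -[RHS]modn_summ.
congr (_ %% _); apply: eq_big_nat => i /andP[_]; rewrite ltnS => le_iN.
rewrite big_ltn ?(ltnW p_gt1) // big_ltn // addn0 addn1 addnA.
have dvd_rest : p ^ (2 * R.+1) %| \sum_(2 <= j < p) sterm (p * N).+1 (p * i + j).
  rewrite big_nat_cond; apply: dvdn_sum => j /andP[lt_j _].
  exact: sterm_pmulD_dvdn.
rewrite -modnDmr (eqP dvd_rest) addn0 -modnDm.
rewrite (sterm_Sn_pmul_congr p_pr p_odd dvd_N le_iN).
rewrite (sterm_SS_pmul_congr p_pr p_odd dvd_N le_iN) modnDm.
by congr (_ %% _); rewrite /sterm; ring.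
Qed.

Theorem theorem3p2 (p m r : nat) :
  prime p -> odd p -> 0 < m -> 0 < r ->
  S (m * p ^ r).+1 = 4 * (m * p ^ r).+1 * S (m * p ^ r.-1) %[mod p ^ (2 * r)].
Proof.
move=> p_pr p_odd _; case: r => // R _ /=.
by rewrite expnS mulnCA; apply: S_pmulS_congr => //; apply: dvdn_mull.
Qed.
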